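(* Let $G=(V,E)$ be a graph and $n\in\mathbb N$. Suppose that for each $i<n$ the set $A_i\subseteq V$ spans an $n$-connected subgraph of $G$, and that there are pairwise distinct points $y_{i,k}$ ($i<n$, $k<n$) and $x_k$ ($k<n$) in $V$ such that $y_{i,k}\in A_i\cap N_G(x_k)$ for all $i<n$, $k<n$. Let $X=\{x_k:k<n\}$. Then $A=\bigcup\{A_i:i<n\}\cup X$ spans an $n$-connected subgraph of $G$.
   Context: A graph is $n$-connected iff the removal of fewer than $n$ vertices leaves it connected. $N_G(v)=\{w\in V:\{v,w\}\in E\}$. *)

From Stdlib Require Import List Relations Arith.

Definition simple_graph (V : Type) (E : V -> V -> Prop) : Prop :=
  (forall u v, E u v -> E v u) /\ (forall v, ~ E v v).

Definition nbhd {V : Type} (E : V -> V -> Prop) (v : V) : V -> Prop :=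
  fun w => E v w.

(* The subgraph spanned by S is connected: any two vertices of S are joined
   by a (finite) path all of whose vertices lie in S. The empty graph counts
   as connected (vacuously). *)
Definition connected_in {V : Type} (E : V -> V -> Prop) (S : V -> Prop) : Prop :=
  forall u v, S u -> S v ->
    clos_refl_trans V (fun a b => S a /\ S b /\ E a b) u v.

Definition n_connected_in {V : Type} (E : V -> V -> Prop) (n : nat)
  (S : V -> Prop) : Prop :=
  forall F : list V, length F < n ->
    connected_in E (fun v => S v /\ ~ In v F).

(* Fix fewer than n removed vertices F.
   For two indices i, i' the n "bridges" y_{i,k} - x_k - y_{i',k} (k < n) are
   pairwise disjoint, so one of them avoids F and joins A_i to A_{i'}; likewise
   among the n neighbours y_{i,k} (i < n) of x_k one avoids F and attaches x_k
   to some A_i. *)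
From Stdlib Require Import List Relations Arith Lia Classical.

Section Pigeonhole.

Context {V : Type}.

Lemma disjoint_blocks_meeting_le_length (F : list V) (n : nat)
  (P : nat -> V -> Prop) :
  (forall k k' w, k < n -> k' < n -> P k w -> P k' w -> k = k') ->
  (forall k, k < n -> exists w, P k w /\ In w F) ->
  n <= length F.
Proof.
  revert F; induction n as [|n IH]; intros F Hdisj Hmeet; [lia|].
  destruct (Hmeet n (Nat.lt_succ_diag_r n)) as [w [Pw Fw]].
  destruct (in_split w F Fw) as [l1 [l2 ->]].
  assert (n <= length (l1 ++ l2)); [|rewrite length_app in *; simpl; lia].
  apply IH.
  - intros k k' v Hk Hk'; apply Hdisj; lia.
  - intros k Hk.
    destruct (Hmeet k (Nat.lt_lt_succ_r _ _ Hk)) as [v [Pv Fv]].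
    exists v; split; [exact Pv|].
    apply in_app_or in Fv; apply in_or_app.
    destruct Fv as [Fv|[->|Fv]]; auto.
    assert (k = n) by (apply (Hdisj k n v); auto); lia.
Qed.

Lemma disjoint_blocks_avoid (F : list V) (n : nat) (P : nat -> V -> Prop) :
  length F < n ->
  (forall k k' w, k < n -> k' < n -> P k w -> P k' w -> k = k') ->
  exists k, k < n /\ forall w, P k w -> ~ In w F.
Proof.
  intros Hlen Hdisj; apply NNPP; intro Hnone.
  enough (n <= length F) by lia.
  apply (disjoint_blocks_meeting_le_length F n P Hdisj).
  intros k Hk; apply NNPP; intro Hmiss.
  apply Hnone; exists k; split; [exact Hk|].
  intros w Pw Fw; eauto.
Qed.

End Pigeonhole.

Section Linked.

Context {V : Type} (E : V -> V -> Prop).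

Definition linked_in (S : V -> Prop) : V -> V -> Prop :=
  clos_refl_trans V (fun a b => S a /\ S b /\ E a b).

Lemma linked_in_edge (S : V -> Prop) a b :
  S a -> S b -> E a b -> linked_in S a b.
Proof. intros; apply rt_step; auto. Qed.

Lemma linked_in_mono (S T : V -> Prop) a b :
  (forall v, S v -> T v) -> linked_in S a b -> linked_in T a b.
Proof.
  intros HST L; induction L as [p q [Sp [Sq Epq]]| |].
  - apply rt_step; auto.
  - apply rt_refl.
  - eapply rt_trans; eauto.
Qed.

Lemma linked_in_sym (E_sym : forall u v, E u v -> E v u) (S : V -> Prop) a b :
  linked_in S a b -> linked_in S b a.
Proof.
  intros L; induction L as [p q [Sp [Sq Epq]]| |].
  - apply rt_step; auto.
  - apply rt_refl.
  - eapply rt_trans; eauto.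
Qed.

End Linked.

Section Gluing.

Variables (V : Type) (E : V -> V -> Prop) (n : nat).
Variables (A : nat -> V -> Prop) (y : nat -> nat -> V) (x : nat -> V).

Hypothesis E_sym : forall u v, E u v -> E v u.
Hypothesis A_conn : forall i, i < n -> n_connected_in E n (A i).
Hypothesis y_inj : forall i k i' k', i < n -> k < n -> i' < n -> k' < n ->
  y i k = y i' k' -> i = i' /\ k = k'.
Hypothesis x_inj : forall k k', k < n -> k' < n -> x k = x k' -> k = k'.
Hypothesis y_neq_x : forall i k k', i < n -> k < n -> k' < n -> y i k <> x k'.
Hypothesis y_in_nbhd : forall i k, i < n -> k < n ->
  A i (y i k) /\ nbhd E (x k) (y i k).

Variable F : list V.
Hypothesis F_small : length F < n.

Let S (v : V) : Prop :=
  ((exists i, i < n /\ A i v) \/ (exists k, k < n /\ v = x k)) /\ ~ In v F.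

Lemma linked_within_piece i a b :
  i < n -> A i a -> ~ In a F -> A i b -> ~ In b F -> linked_in E S a b.
Proof.
  intros Hi Aa Fa Ab Fb.
  apply (linked_in_mono E (fun v => A i v /\ ~ In v F)).
  - intros v [Av Fv]; split; [left; eauto | exact Fv].
  - exact (A_conn i Hi F F_small a b (conj Aa Fa) (conj Ab Fb)).
Qed.

Lemma bridges_disjoint i i' :
  i < n -> i' < n -> i <> i' ->
  forall k k' w, k < n -> k' < n ->
    (w = y i k \/ w = x k \/ w = y i' k) ->
    (w = y i k' \/ w = x k' \/ w = y i' k') -> k = k'.
Proof.
  intros Hi Hi' Hne k k' w Hk Hk' Hw Hw'.
  destruct Hw as [-> | [-> | ->]]; destruct Hw' as [Hw'|[Hw'|Hw']];
    first [ exact (proj2 (y_inj _ _ _ _ Hi Hk Hi Hk' Hw'))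
          | exact (proj2 (y_inj _ _ _ _ Hi' Hk Hi' Hk' Hw'))
          | exact (x_inj _ _ Hk Hk' Hw')
          | destruct (Hne (proj1 (y_inj _ _ _ _ Hi Hk Hi' Hk' Hw')))
          | destruct (Hne (eq_sym (proj1 (y_inj _ _ _ _ Hi' Hk Hi Hk' Hw'))))
          | destruct (y_neq_x _ _ _ Hi Hk' Hk (eq_sym Hw'))
          | destruct (y_neq_x _ _ _ Hi' Hk' Hk (eq_sym Hw'))
          | destruct (y_neq_x _ _ _ Hi Hk Hk' Hw')
          | destruct (y_neq_x _ _ _ Hi' Hk Hk' Hw') ].
Qed.

Lemma linked_across_pieces i i' a b :
  i < n -> i' < n -> A i a -> ~ In a F -> A i' b -> ~ In b F ->
  linked_in E S a b.
Proof.
  intros Hi Hi' Aa Fa Ab Fb.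
  destruct (Nat.eq_dec i i') as [<-|Hne].
  { exact (linked_within_piece i a b Hi Aa Fa Ab Fb). }
  destruct (disjoint_blocks_avoid F n _ F_small (bridges_disjoint i i' Hi Hi' Hne))
    as [k [Hk Hfree]].
  destruct (y_in_nbhd i k Hi Hk) as [Ay Ey].
  destruct (y_in_nbhd i' k Hi' Hk) as [Ay' Ey'].
  assert (Sy : S (y i k)) by (split; [left; eauto | auto]).
  assert (Sx : S (x k)) by (split; [right; eauto | auto]).
  assert (Sy' : S (y i' k)) by (split; [left; eauto | auto]).
  apply rt_trans with (y i k); [exact (linked_within_piece i a _ Hi Aa Fa Ay (proj2 Sy))|].
  apply rt_trans with (x k); [exact (linked_in_edge E S _ _ Sy Sx (E_sym _ _ Ey))|].
  apply rt_trans with (y i' k); [exact (linked_in_edge E S _ _ Sx Sy' Ey')|].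
  exact (linked_within_piece i' _ b Hi' Ay' (proj2 Sy') Ab Fb).
Qed.

Lemma linked_to_some_piece u :
  S u -> exists i a, i < n /\ A i a /\ ~ In a F /\ linked_in E S u a.
Proof.
  intros [[[i [Hi Au]] | [k [Hk ->]]] Fu].
  - exists i, u; repeat split; auto; apply rt_refl.
  - assert (Hdisj : forall i i' w, i < n -> i' < n -> w = y i k -> w = y i' k -> i = i').
    { intros i i' w Hi Hi' -> Hw; exact (proj1 (y_inj _ _ _ _ Hi Hk Hi' Hk Hw)). }
    destruct (disjoint_blocks_avoid F n _ F_small Hdisj) as [i [Hi Hfree]].
    destruct (y_in_nbhd i k Hi Hk) as [Ay Ey].
    assert (Fy : ~ In (y i k) F) by auto.
    exists i, (y i k); repeat split; auto.
    apply linked_in_edge; [split; [right; eauto | exact Fu] | split; [left; eauto | exact Fy] | exact Ey].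
Qed.

Lemma union_minus_connected : connected_in E S.
Proof.
  intros u v Su Sv.
  destruct (linked_to_some_piece u Su) as [i [a [Hi [Aa [Fa Lu]]]]].
  destruct (linked_to_some_piece v Sv) as [i' [b [Hi' [Ab [Fb Lv]]]]].
  apply rt_trans with a; [exact Lu|].
  apply rt_trans with b; [exact (linked_across_pieces i i' a b Hi Hi' Aa Fa Ab Fb)|].
  exact (linked_in_sym E E_sym S v b Lv).
Qed.

End Gluing.

Theorem mainTheorem4 (V : Type) (E : V -> V -> Prop) (n : nat)
  (A : nat -> V -> Prop) (y : nat -> nat -> V) (x : nat -> V) :
  simple_graph V E ->
  (forall i, i < n -> n_connected_in E n (A i)) ->
  (* the points y_{i,k} and x_k are pairwise distinct *)
  (forall i k i' k', i < n -> k < n -> i' < n -> k' < n ->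
     y i k = y i' k' -> i = i' /\ k = k') ->
  (forall k k', k < n -> k' < n -> x k = x k' -> k = k') ->
  (forall i k k', i < n -> k < n -> k' < n -> y i k <> x k') ->
  (forall i k, i < n -> k < n -> A i (y i k) /\ nbhd E (x k) (y i k)) ->
  n_connected_in E n
    (fun v => (exists i, i < n /\ A i v) \/ (exists k, k < n /\ v = x k)).
Proof.
  intros [E_sym _] A_conn y_inj x_inj y_neq_x y_in_nbhd F F_small.
  exact (union_minus_connected V E n A y x E_sym A_conn y_inj x_inj y_neq_x
           y_in_nbhd F F_small).
Qed.
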